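(* Let $R$ be a commutative Noetherian ring with non-zero identity. Let $\mathcal{P}$ be a finite subset of $R$, and let $I$ be the ideal of $R$ generated by $\mathcal{P}$. Let $r \ge 0$ be an integer. Assume that there exist subsets $\mathcal{P}_0, \mathcal{P}_1, \ldots, \mathcal{P}_r$ of $\mathcal{P}$ such that: (SV1) $\mathcal{P} = \mathcal{P}_0 \cup \mathcal{P}_1 \cup \cdots \cup \mathcal{P}_r$; (SV2) $\mathcal{P}_0$ has exactly one element; (SV3) for each $\ell$ with $0 < \ell \le r$ and for every $a, a'' \in \mathcal{P}_\ell$ with $a \ne a''$, there exist an integer $\ell'$ with $0 \le \ell' < \ell$ and elements $a' \in \mathcal{P}_{\ell'}$ and $b \in I$ such that $a a'' = a' b$. Set $g_\ell = \sum_{a \in \mathcal{P}_\ell} a$ for $\ell = 0, 1, \ldots, r$. Then $J = (g_0, g_1, \ldots, g_r)$ is a reduction of $I$.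
   Context: An ideal $J \subseteq I$ is called a reduction of $I$ if there exists an integer $s \ge 1$ such that $I^{s+1} = J I^{s}$. *)

From HB Require Import structures.
From mathcomp Require Export all_boot all_order all_algebra.
From mathcomp Require Export finmap.
Set Implicit Arguments. Unset Strict Implicit. Unset Printing Implicit Defensive.
Import GRing.Theory.
Local Open Scope ring_scope.

Definition is_ideal (R : comNzRingType) (I : R -> Prop) : Prop :=
  [/\ I 0, (forall x y, I x -> I y -> I (x + y)) & (forall a x, I x -> I (a * x))].

Definition noetherian (R : comNzRingType) : Prop :=
  forall F : nat -> R -> Prop,
    (forall n, is_ideal (F n)) ->
    (forall n x, F n x -> F n.+1 x) ->
    exists N : nat, forall n x, (N <= n)%N -> F n x -> F N x.

Definition gen_ideal (R : comNzRingType) (S : R -> Prop) : R -> Prop :=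
  fun x => forall I, is_ideal I -> (forall s, S s -> I s) -> I x.

Definition ideal_mul (R : comNzRingType) (A B : R -> Prop) : R -> Prop :=
  gen_ideal (fun x => exists a b, [/\ A a, B b & x = a * b]).

Fixpoint ideal_pow (R : comNzRingType) (I : R -> Prop) (n : nat) : R -> Prop :=
  match n with
  | 0 => fun _ => True
  | n'.+1 => ideal_mul I (ideal_pow I n')
  end.

Definition is_reduction (R : comNzRingType) (J I : R -> Prop) : Prop :=
  (forall x, J x -> I x) /\
  exists s : nat, (1 <= s)%N /\
    forall x, ideal_pow I s.+1 x <-> ideal_mul J (ideal_pow I s) x.

Import GRing.Theory.
Local Open Scope ring_scope.
Local Open Scope fset_scope.
Set Implicit Arguments. Unset Strict Implicit.

(* Write K_l for the ideal generated by J and P_0, ..., P_(l-1).  Since P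
   generates I we have I^1 = K_(r+1) I^0.  The key observation is that if
   a is in I, a^2 is in K I and I^(n+1) = (K + (a)) I^n, then
   I^(n+2) = K I^(n+1).  For a in P_l, (SV3) gives
   a^2 = a g_l - sum_(a'' <> a) a a'' in K_l I, so the elements of P_l can
   be dropped one at a time, going from K_(l+1) down to K_l.  Finally
   K_1 = J because P_0 = {g_0}. *)

Section IdealProducts.

Variable R : comNzRingType.
Implicit Types (S T A B C : R -> Prop) (a b c x : R).

Lemma gen_ideal_ideal S : is_ideal (gen_ideal S).
Proof.
split=> [I [] // | x y Sx Sy I HI HS | a x Sx I HI HS]; case: (HI) => _ addI mulI.
  by apply: addI; [exact: Sx | exact: Sy].
by apply: mulI; exact: Sx.
Qed.

Lemma mem_gen_ideal S x : S x -> gen_ideal S x.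
Proof. by move=> Sx I _; apply. Qed.

Lemma gen_ideal_sub S T x :
  is_ideal T -> (forall s, S s -> T s) -> gen_ideal S x -> T x.
Proof. by move=> idT ST; apply. Qed.

Lemma gen_ideal_mono S T x :
  (forall s, S s -> T s) -> gen_ideal S x -> gen_ideal T x.
Proof.
move=> ST; apply: gen_ideal_sub; first exact: gen_ideal_ideal.
by move=> s /ST; apply: mem_gen_ideal.
Qed.

Lemma idealB T x y : is_ideal T -> T x -> T y -> T (x - y).
Proof. by case=> _ addT mulT Tx Ty; rewrite -mulN1r; apply: addT => //; apply: mulT. Qed.

Lemma ideal_sum T (I : eqType) (s : seq I) (P : pred I) (F : I -> R) :
  is_ideal T -> (forall i, i \in s -> P i -> T (F i)) -> T (\sum_(i <- s | P i) F i).
Proof.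
by case=> T0 addT _ sT; rewrite big_seq_cond; apply: big_ind => // i /andP[]; apply: sT.
Qed.

Lemma mulr_preim_ideal T c : is_ideal T -> is_ideal (fun x => T (c * x)).
Proof.
case=> T0 addT mulT; split=> [|x y Tx Ty|a x Tx]; first by rewrite mulr0.
  by rewrite mulrDr; apply: addT.
by rewrite mulrCA; apply: mulT.
Qed.

Lemma colon_ideal T B : is_ideal T -> is_ideal (fun x => forall b, B b -> T (x * b)).
Proof.
case=> T0 addT mulT; split=> [b _|x y Tx Ty b Bb|a x Tx b Bb]; first by rewrite mul0r.
  by rewrite mulrDl; apply: addT; [apply: Tx | apply: Ty].
by rewrite -mulrA; apply: mulT; apply: Tx.
Qed.

Lemma ideal_mul_ideal A B : is_ideal (ideal_mul A B).
Proof. exact: gen_ideal_ideal. Qed.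

Lemma mem_ideal_mul A B a b : A a -> B b -> ideal_mul A B (a * b).
Proof. by move=> Aa Bb; apply: mem_gen_ideal; exists a, b. Qed.

Lemma ideal_mul_sub A B T x :
  is_ideal T -> (forall a b, A a -> B b -> T (a * b)) -> ideal_mul A B x -> T x.
Proof. by move=> idT AB_T; apply: gen_ideal_sub => // _ [a [b [Aa Bb ->]]]; apply: AB_T. Qed.

Lemma ideal_mul_gen_sub S B T x :
  is_ideal T -> (forall s b, S s -> B b -> T (s * b)) ->
  ideal_mul (gen_ideal S) B x -> T x.
Proof.
move=> idT SB_T; apply: ideal_mul_sub => // y b Sy; move: b.
apply: (gen_ideal_sub (T := fun y => forall b, B b -> T (y * b))) Sy.
  exact: colon_ideal.
by move=> s Ss b; apply: SB_T.
Qed.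

Lemma ideal_mul_monoL A A' B x :
  (forall y, A y -> A' y) -> ideal_mul A B x -> ideal_mul A' B x.
Proof.
move=> AA'; apply: ideal_mul_sub; first exact: ideal_mul_ideal.
by move=> a b /AA' A'a Bb; apply: mem_ideal_mul.
Qed.

Lemma ideal_mul_monoR A B B' x :
  (forall y, B y -> B' y) -> ideal_mul A B x -> ideal_mul A B' x.
Proof.
move=> BB'; apply: ideal_mul_sub; first exact: ideal_mul_ideal.
by move=> a b Aa /BB' B'b; apply: mem_ideal_mul.
Qed.

Lemma ideal_mulCA_sub A B C x :
  ideal_mul A (ideal_mul B C) x -> ideal_mul B (ideal_mul A C) x.
Proof.
apply: ideal_mul_sub; first exact: ideal_mul_ideal.
move=> a y Aa; apply: (ideal_mul_sub (T := fun y => ideal_mul B (ideal_mul A C) (a * y))).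
  exact/mulr_preim_ideal/ideal_mul_ideal.
by move=> b c Bb Cc; rewrite mulrCA; apply: mem_ideal_mul => //; apply: mem_ideal_mul.
Qed.

Lemma ideal_mulA_sub A B C x :
  ideal_mul (ideal_mul A B) C x -> ideal_mul A (ideal_mul B C) x.
Proof.
apply: ideal_mul_sub; first exact: ideal_mul_ideal.
move=> y c ABy Cc; rewrite mulrC; move: ABy.
apply: (ideal_mul_sub (T := fun y => ideal_mul A (ideal_mul B C) (c * y))).
  exact/mulr_preim_ideal/ideal_mul_ideal.
by move=> a b Aa Bb; rewrite mulrC -mulrA; apply: mem_ideal_mul => //; apply: mem_ideal_mul.
Qed.

Lemma ideal_pow_mulS I K n :
  (forall x, ideal_pow I n.+1 x -> ideal_mul K (ideal_pow I n) x) ->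
  forall x, ideal_pow I n.+2 x -> ideal_mul K (ideal_pow I n.+1) x.
Proof. by move=> IK x /(ideal_mul_monoR IK) /ideal_mulCA_sub. Qed.

End IdealProducts.

Definition generates_reduction (R : comNzRingType) (G I : R -> Prop) : Prop :=
  exists n, forall x, ideal_pow I n.+1 x -> ideal_mul (gen_ideal G) (ideal_pow I n) x.

Section GeneratesReduction.

Variables (R : comNzRingType) (I : R -> Prop).
Implicit Types (G H : R -> Prop) (a x : R).

Lemma generates_reduction_mono G H :
  (forall x, G x -> H x) -> generates_reduction G I -> generates_reduction H I.
Proof.
move=> GH [n IG]; exists n => x /IG; apply: ideal_mul_monoL => y.
exact: gen_ideal_mono.
Qed.

Lemma generates_reduction_drop G a :
  I a -> ideal_mul (gen_ideal G) I (a * a) ->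
  generates_reduction (fun x => G x \/ x = a) I -> generates_reduction G I.
Proof.
move=> Ia Iaa [n IGa]; exists n.+1.
set T := ideal_mul (gen_ideal G) (ideal_pow I n.+1).
have idT : is_ideal T by exact: ideal_mul_ideal.
have GT s y : G s -> ideal_pow I n.+1 y -> T (s * y).
  by move=> Gs Iy; apply: mem_ideal_mul => //; apply: mem_gen_ideal.
(* a I^(n+1) lies in a (G + (a)) I^n, and a^2 I^n lies in ((G) I) I^n. *)
have aT y : ideal_pow I n.+1 y -> T (a * y).
  move=> /IGa; apply: (ideal_mul_gen_sub (T := fun z => T (a * z))).
    exact: mulr_preim_ideal.
  move=> s w [Gs | ->] Iw; first by rewrite mulrCA; apply: GT => //; apply: mem_ideal_mul.
  by rewrite mulrA; apply: ideal_mulA_sub; apply: mem_ideal_mul.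
move=> x /(ideal_pow_mulS IGa); apply: ideal_mul_gen_sub => // s y [Gs | ->].
  exact: GT.
exact: aT.
Qed.

Lemma generates_reduction_drop_seq G (s : seq R) :
  {in s, forall a, I a} -> {in s, forall a, ideal_mul (gen_ideal G) I (a * a)} ->
  generates_reduction (fun x => G x \/ x \in s) I -> generates_reduction G I.
Proof.
elim: s => [|a s IHs] sI sGI Gs_red.
  by apply: generates_reduction_mono Gs_red => x /= [].
have sub_s b : b \in s -> b \in a :: s by rewrite in_cons => ->; rewrite orbT.
apply: IHs => [b /sub_s/sI // | b /sub_s/sGI // | ].
apply: (@generates_reduction_drop _ a (sI a (mem_head a s))).
  apply: ideal_mul_monoL (sGI a (mem_head a s)) => y.
  by apply: gen_ideal_mono => z Gz /=; left.
apply: generates_reduction_mono Gs_red => x /= [Gx | ]; first by left; left.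
by rewrite in_cons => /orP [/eqP -> | xs]; [right | left; right].
Qed.

Lemma reduction_of_generates G J :
  is_ideal J -> (forall x, G x -> J x) -> (forall x, J x -> I x) ->
  generates_reduction G I -> is_reduction J I.
Proof.
move=> idJ GJ JI [n IG]; split=> //; exists n.+1; split=> // x; split.
  move=> /(ideal_pow_mulS IG); apply: ideal_mul_monoL => y.
  exact: gen_ideal_sub.
exact: ideal_mul_monoL.
Qed.

End GeneratesReduction.

Lemma sqr_mem_ideal_mul_sum (R : comNzRingType) (H I : R -> Prop) (s : seq R) a :
  uniq s -> a \in s -> I a ->
  (forall b, b \in s -> b != a -> ideal_mul (gen_ideal H) I (a * b)) ->
  ideal_mul (gen_ideal (fun x => H x \/ x = \sum_(b <- s) b)) I (a * a).
Proof.
move=> s_uniq sa Ia HIab.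
have idKI := ideal_mul_ideal (gen_ideal (fun x => H x \/ x = \sum_(b <- s) b)) I.
have -> : a * a = a * \sum_(b <- s) b - \sum_(b <- s | b != a) a * b.
  by rewrite mulr_sumr (bigD1_seq a) //= addrK.
apply: (idealB idKI).
  by rewrite mulrC; apply: mem_ideal_mul => //; apply: mem_gen_ideal; right.
apply: ideal_sum => // b sb nba.
apply: ideal_mul_monoL (HIab b sb nba) => y.
by apply: gen_ideal_mono => z Hz; left.
Qed.

Definition below_layers (R : comNzRingType) (J : R -> Prop) (Ps : nat -> {fset R})
    (l : nat) : R -> Prop :=
  fun x => J x \/ exists2 l', (l' < l)%N & x \in Ps l'.

Lemma generates_reduction_below_layers (R : comNzRingType) (I J : R -> Prop)
    (Ps : nat -> {fset R}) (l : nat) :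
  {in Ps l, forall a, I a} -> J (\sum_(a <- Ps l) a) ->
  (forall a a2, a \in Ps l -> a2 \in Ps l -> a != a2 ->
     exists l', (l' < l)%N /\
       exists a', a' \in Ps l' /\ exists b, I b /\ a * a2 = a' * b) ->
  generates_reduction (below_layers J Ps l.+1) I ->
  generates_reduction (below_layers J Ps l) I.
Proof.
move=> PsI Jg SV3 red_l1.
apply: (generates_reduction_drop_seq (s := Ps l)) => // [a Psa | ].
  apply: ideal_mul_monoL
    (sqr_mem_ideal_mul_sum (H := below_layers J Ps l) (fset_uniq _) Psa (PsI a Psa) _).
    by move=> y; apply: gen_ideal_mono => x [// | ->]; left.
  move=> b Psb nba; have nab : a != b by rewrite eq_sym.
  have [l' [lt_l'l [a' [Psa' [c [Ic ->]]]]]] := SV3 a b Psa Psb nab.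
  by apply: mem_ideal_mul => //; apply: mem_gen_ideal; right; exists l'.
apply: generates_reduction_mono red_l1 => x /= [Jx | [l']]; first by left; left.
rewrite ltnS leq_eqVlt => /orP [/eqP -> | lt_l'l] Psx; first by right.
by left; right; exists l'.
Qed.

Theorem theorem1p1 (R : comNzRingType) (hR : noetherian R)
  (P : {fset R}) (r : nat) (Ps : nat -> {fset R}) :
  let I := gen_ideal (fun x : R => x \in P) in
  (forall l, (l <= r)%N -> Ps l `<=` P) ->
  P = \big[@fsetU R/fset0]_(l < r.+1) Ps l ->
  #|` Ps 0%N| = 1%N ->
  (forall l, (0 < l <= r)%N ->
     forall a a2, a \in Ps l -> a2 \in Ps l -> a != a2 ->
       exists l', (l' < l)%N /\
         exists a', a' \in Ps l' /\ exists b, I b /\ a * a2 = a' * b) ->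
  let g := fun l : nat => \sum_(a <- Ps l) a in
  is_reduction (gen_ideal (fun x : R => exists l, (l <= r)%N /\ x = g l)) I.
Proof.
move=> I Psub cover card_Ps0 SV3 g; set J := gen_ideal _.
have PsI l : (l <= r)%N -> {in Ps l, forall a, I a}.
  by move=> le_lr a Psa; apply: mem_gen_ideal; apply: (fsubsetP (Psub l le_lr)).
have Jg l : (l <= r)%N -> J (g l) by move=> le_lr; apply: mem_gen_ideal; exists l.
have JI x : J x -> I x.
  apply: gen_ideal_sub => [|_ [l [le_lr ->]]]; first exact: gen_ideal_ideal.
  by apply: (ideal_sum (T := I)) => [|a /(PsI l le_lr)]; first exact: gen_ideal_ideal.
have red_top : generates_reduction (below_layers J Ps r.+1) I.
  exists 0%N => x; apply: ideal_mul_monoL => y; apply: gen_ideal_mono => z.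
  by rewrite cover => /bigfcupP [i _ Psz]; right; exists i.
have red_below k : (k <= r)%N -> generates_reduction (below_layers J Ps (r.+1 - k)) I.
  elim: k => [_ | k IHk lt_kr]; first by rewrite subn0.
  rewrite subSS; apply: generates_reduction_below_layers.
  - exact: PsI (leq_subr k r).
  - exact: Jg (leq_subr k r).
  - by apply: SV3; rewrite subn_gt0 lt_kr leq_subr.
  - by rewrite -subSn ?(ltnW lt_kr) //; apply/IHk/ltnW.
have [p0 Ps0] : exists p0, Ps 0%N = [fset p0] by apply/cardfs1P; rewrite card_Ps0.
have := red_below r (leqnn r); rewrite subSnn.
apply: reduction_of_generates JI => [|x [// | [l']]]; first exact: gen_ideal_ideal.
rewrite ltnS leqn0 => /eqP ->; rewrite Ps0 in_fset1 => /eqP ->.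
by have := Jg 0%N (leq0n r); rewrite /g Ps0 big_seq_fset1.
Qed.
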